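(* Let $\mathscr{D}_1=\{C_{3,1},C_{3,2},C_{3,3},C_{4,1},C_{4,2},C_{4,3},C_{5,1},C_{5,2},C_{5,3}\}$ and $\mathscr{D}_2=\{C_3,C_4,C_5\}$. Let $\mathscr{F}$ be the family of all graphs $G$ obtained as follows: take a single vertex $v$, graphs $A_1,\dots,A_t\in\mathscr{D}_1$ and graphs $B_1,\dots,B_s\in\mathscr{D}_2$, where $s,t\geq 0$ and $s+t\geq 2$ (all these graphs vertex-disjoint), and identify the leaf of each $A_i$ and one vertex of each $B_j$ with $v$. Let $G_4$ be the graph in $\mathscr{F}$ obtained with one gadget $C_4$ and one gadget $C_{4,1}$ (explicitly: vertices $a,a_1,a_2,a_3,b_1,b_2,b_3,b_4$ and edges $aa_1,aa_2,aa_3,a_2b_4,a_3b_4,a_1b_1,b_1b_2,b_2b_3,b_3a_1$), and let $G_5$ be the graph in $\mathscr{F}$ obtained with one gadget $C_4$ and one gadget $C_5$. If $G\in\mathscr{F}\setminus\{G_4,G_5\}$, then $\gamma^{d}_2(G)\leq \frac{|V(G)|}{3}$.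
   Context: All graphs are finite and simple. A set $S$ of vertices of a graph $G$ is a disjunctive dominating set of $G$ if every vertex not in $S$ is adjacent to a vertex of $S$ or has at least two vertices of $S$ at distance exactly $2$ from it in $G$. The disjunctive domination number $\gamma^{d}_2(G)$ is the minimum cardinality of a disjunctive dominating set of $G$. $C_n$ denotes the cycle on $n$ vertices. For $s\geq 3$ and $t\geq 1$, $C_{s,t}$ denotes the graph obtained from a cycle $C_s$ and a path with $t$ edges by identifying one end vertex of the path with a vertex of the cycle; the other end vertex of the path (a vertex of degree $1$) is called the leaf of $C_{s,t}$. Thus $C_{s,t}$ has $s+t$ vertices. *)

From mathcomp Require Import all_boot.
Set Implicit Arguments. Unset Strict Implicit. Unset Printing Implicit Defensive.

(* A graph is given by an adjacency relation e : rel T (intended symmetric,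
   irreflexive). *)

Definition dist2 (T : finType) (e : rel T) (x y : T) : bool :=
  [&& x != y, ~~ e x y & [exists z, e x z && e z y]].

Definition disj_domb (T : finType) (e : rel T) (S : {set T}) : bool :=
  [forall x, (x \notin S) ==>
     ([exists y in S, e x y] || (2 <= #|[set y in S | dist2 e x y]|))].

(* gamma^d_2 : minimum cardinality of a disjunctive dominating set
   (setT is always one, so #|T| is a valid default). *)
Definition gamma_d2 (T : finType) (e : rel T) : nat :=
  \big[minn/#|T|]_(S : {set T} | disj_domb e S) #|S|.

(* A gadget is a pair (s, t) : nat * nat, on local vertices 0 .. s+t-1:
   cycle 0 - 1 - ... - (s-1) - 0, and path 0 - s - (s+1) - ... - (s+t-1).
   The vertex identified with v (its root) is the leaf s+t-1 if t >= 1,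
   and vertex 0 if t = 0 (a plain cycle C_s). *)
Definition gsz (g : nat * nat) : nat := g.1 + g.2.
Definition groot (g : nat * nat) : nat := if g.2 == 0 then 0 else g.1 + g.2 - 1.

Definition cyc_edge (s a b : nat) : bool :=
  [&& a < s, b < s & (b == (a.+1 %% s)) || (a == (b.+1 %% s))].
Definition path_edge1 (s t a b : nat) : bool :=
  (((a == 0) && (b == s)) || ((s <= a) && (b == a.+1))) && (b < s + t).
Definition gedge (g : nat * nat) (a b : nat) : bool :=
  [|| cyc_edge g.1 a b, path_edge1 g.1 g.2 a b | path_edge1 g.1 g.2 b a].

(* Vertex None is v; vertex Some (i; j) is the j-th non-root vertex of the
   i-th gadget, i.e. local vertex (bump (root) j). *)
Definition gadgets_vert (L : seq (nat * nat)) : finType :=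
  option {i : 'I_(size L) & 'I_((gsz (nth (0, 0) L i)).-1)}.

Definition gadgets_adj (L : seq (nat * nat)) : rel (gadgets_vert L) :=
  fun x y =>
    match x, y with
    | None, None => false
    | None, Some u =>
        let g := nth (0, 0) L (tag u) in gedge g (groot g) (bump (groot g) (tagged u))
    | Some u, None =>
        let g := nth (0, 0) L (tag u) in gedge g (bump (groot g) (tagged u)) (groot g)
    | Some u, Some w =>
        let g := nth (0, 0) L (tag u) in
        ((tag u : nat) == tag w) &&
          gedge g (bump (groot g) (tagged u)) (bump (groot g) (tagged w))
    end.

Arguments gadgets_adj : clear implicits.

Definition in_D1 (g : nat * nat) : bool := (3 <= g.1 <= 5) && (1 <= g.2 <= 3).
Definition in_D2 (g : nat * nat) : bool := (3 <= g.1 <= 5) && (g.2 == 0).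

Definition F_list (L : seq (nat * nat)) : bool :=
  all (fun g => in_D1 g || in_D2 g) L && (2 <= size L).

Definition G4_list : seq (nat * nat) := [:: (4, 0); (4, 1)].
Definition G5_list : seq (nat * nat) := [:: (4, 0); (5, 0)].

From mathcomp Require Import all_boot zify.
Set Implicit Arguments. Unset Strict Implicit. Unset Printing Implicit Defensive.

(* A graph of F is a vertex v with gadgets glued at v, so a vertex set S can be
   assembled from a choice of vertices inside each gadget together with the
   decision whether v is in S. Such an S is disjunctively dominating as soon as
   every gadget passes a local test and v itself is dominated, and for each of
   the twelve gadget types the choices below take at most a third of its
   non-root vertices. If the gadgets together have at least two vertices to
   spare, v can be afforded in S. Otherwise v stays out of S and at most one
   gadget fails to choose a neighbour of v; with three or more gadgets every
   gadget then sees such a neighbour in another gadget, which supplies the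
   missing witnesses at distance two through v. Two gadgets are settled by a
   finite check over all pairs, which succeeds for every pair except those
   forming G_4 and G_5. *)

Section DisjunctiveDomination.
Variables (T : finType) (e : rel T).

Definition disj_dominated (S : {set T}) (x : T) : bool :=
  [exists y in S, e x y] || (1 < #|[set y in S | dist2 e x y]|).

Lemma disj_dombP (S : {set T}) :
  reflect (forall x, x \notin S -> disj_dominated S x) (disj_domb e S).
Proof.
apply: (iffP forallP) => dS x; first exact/implyP.
exact/implyP/dS.
Qed.

Lemma gamma_d2_le (S : {set T}) : disj_domb e S -> gamma_d2 e <= #|S|.
Proof.
move=> dS; rewrite /gamma_d2; move: (mem_index_enum S).
elim: (index_enum _) => //= S' r IH; rewrite inE big_cons => /predU1P[<-|/IH le_r].
  by rewrite dS geq_minl.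
by case: ifP => // _; rewrite geq_min le_r orbT.
Qed.

End DisjunctiveDomination.

Section Gadget.
Variable g : nat * nat.
Hypothesis cycle_g : 1 < g.1.

Lemma groot_lt : groot g < gsz g.
Proof. by rewrite /groot /gsz; case: eqP => /= _; lia. Qed.

Lemma gedge_irr a : ~~ gedge g a a.
Proof.
have path_irr : ~~ path_edge1 g.1 g.2 a a.
  by apply/negP => /andP[/orP[/andP[/eqP a0 /eqP a_s]|/andP[_ /eqP a_Sa]] _]; lia.
rewrite /gedge orbb negb_or path_irr andbT /cyc_edge.
apply/negP => /and3P[lt_a _]; rewrite orbb => /eqP.
have [lt_a1|ge_a1] := ltnP a.+1 g.1; first by rewrite modn_small //; lia.
have ->: a.+1 = g.1 by lia.
by rewrite modnn; lia.
Qed.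

End Gadget.

Definition gdist2 (g : nat * nat) (a b : nat) : bool :=
  [&& a != b, ~~ gedge g a b & has (fun z => gedge g a z && gedge g z b) (iota 0 (gsz g))].

(* The local view of a gadget [g] glued at its root, which is v: [C] lists the
   chosen non-root local vertices and [vS] says whether v is chosen. The flag
   [ext] records that another gadget has a chosen neighbour of v; that vertex is
   at distance two from every neighbour of v in [g]. *)
Definition gchosen (g : nat * nat) (vS : bool) (C : seq nat) (y : nat) : bool :=
  if y == groot g then vS else y \in C.

Definition gwitnesses (g : nat * nat) (vS : bool) (C : seq nat) (x : nat) : seq nat :=
  [seq y <- iota 0 (gsz g) | gchosen g vS C y && gdist2 g x y].

Definition gdominated (g : nat * nat) (vS : bool) (C : seq nat) (ext : bool) (x : nat)
    : bool :=
  [|| gchosen g vS C x, has (fun y => gchosen g vS C y && gedge g x y) (iota 0 (gsz g)),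
      1 < size (gwitnesses g vS C x) |
      [&& ext, gedge g x (groot g) & 0 < size (gwitnesses g vS C x)]].

Definition gcert (g : nat * nat) (vS : bool) (C : seq nat) (ext : bool) : bool :=
  all (fun x => (x == groot g) || gdominated g vS C ext x) (iota 0 (gsz g)).

Definition gtouches_root (g : nat * nat) (C : seq nat) : bool :=
  has (fun y => (y \in C) && gedge g (groot g) y) (iota 0 (gsz g)).

Definition groot_witness (g : nat * nat) (C : seq nat) : bool :=
  has (fun y => (y \in C) && gdist2 g (groot g) y) (iota 0 (gsz g)).

Lemma gcert_mono g vS C (ext ext' : bool) :
  (ext -> ext') -> gcert g vS C ext -> gcert g vS C ext'.
Proof.
move=> le_ext; apply: sub_all => x /=; rewrite /gdominated.
by case: ext le_ext => [-> //|_]; rewrite andFb orbF => /orP[-> | /or3P[] ->]; rewrite ?orbT.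
Qed.

Section Assembly.
Variable L : seq (nat * nat).
Hypothesis cycle_L : forall i : 'I_(size L), 1 < (nth (0, 0) L i).1.

Local Notation gad i := (nth (0, 0) L i).
Local Notation V := (gadgets_vert L).
Local Notation adj := (gadgets_adj L).
Local Notation slot := {k : 'I_(size L) & 'I_((gsz (gad k)).-1)}.
Local Notation tagV i j := (existT (fun k : 'I_(size L) => 'I_((gsz (gad k)).-1)) i j).
Implicit Types (i j : 'I_(size L)) (u : slot).

Definition gvert (i : 'I_(size L)) (z : nat) : V :=
  if z == groot (gad i) then None
  else if insub (unbump (groot (gad i)) z) is Some j then Some (tagV i j) else None.

Lemma gvert_root i : gvert i (groot (gad i)) = None.
Proof. by rewrite /gvert eqxx. Qed.

Lemma gvert_bump u : gvert (tag u) (bump (groot (gad (tag u))) (tagged u)) = Some u.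
Proof. by case: u => i j; rewrite /gvert eq_sym (negbTE (neq_bump _ _)) bumpK valK. Qed.

Lemma gvert_tag i z u : gvert i z = Some u -> tag u = i.
Proof. by rewrite /gvert; case: eqP => // _; case: insub => // j [<-]. Qed.

Lemma gvertP i z : z < gsz (gad i) -> z != groot (gad i) ->
  exists2 j, gvert i z = Some (tagV i j) & bump (groot (gad i)) j = z.
Proof.
move=> lt_z neq_z; have lt_r := groot_lt (cycle_L i).
have lt_uz : unbump (groot (gad i)) z < (gsz (gad i)).-1.
  by move: neq_z; rewrite /unbump; case: ltnP => /= [|le_z] /eqP; lia.
by exists (Ordinal lt_uz); rewrite /gvert ?unbumpK ?inE // (negbTE neq_z) insubT.
Qed.

Lemma gvert_adj i a b : a < gsz (gad i) -> b < gsz (gad i) ->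
  adj (gvert i a) (gvert i b) = gedge (gad i) a b.
Proof.
move=> lt_a lt_b.
have [->|neq_a] := eqVneq a (groot (gad i)); have [->|neq_b] := eqVneq b (groot (gad i)).
- by rewrite gvert_root (negbTE (gedge_irr (cycle_L i) _)).
- by rewrite gvert_root; have [j -> <-] := gvertP lt_b neq_b.
- by rewrite gvert_root; have [j -> <-] := gvertP lt_a neq_a.
have [j -> <-] := gvertP lt_a neq_a; have [k -> <-] := gvertP lt_b neq_b.
by rewrite /= eqxx.
Qed.

Lemma gvert_inj i a b : a < gsz (gad i) -> b < gsz (gad i) ->
  gvert i a = gvert i b -> a = b.
Proof.
move=> lt_a lt_b.
have [->|neq_a] := eqVneq a (groot (gad i)); have [->|neq_b] := eqVneq b (groot (gad i)) => //.
- by rewrite gvert_root; have [j -> _] := gvertP lt_b neq_b.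
- by rewrite gvert_root; have [j -> _] := gvertP lt_a neq_a.
have [j -> <-] := gvertP lt_a neq_a; have [k -> <-] := gvertP lt_b neq_b.
by move=> [/eqP]; rewrite eq_Tagged /= => /eqP ->.
Qed.

Lemma gvert_tag_neq i j a b : i != j -> b < gsz (gad j) -> b != groot (gad j) ->
  gvert i a != gvert j b.
Proof.
move=> neq_ij lt_b neq_b; have [k -> _] := gvertP lt_b neq_b.
by apply: contra neq_ij => /eqP/gvert_tag /= ->.
Qed.

Lemma gvert_dist2 i a b : a < gsz (gad i) -> b < gsz (gad i) ->
  gdist2 (gad i) a b -> dist2 adj (gvert i a) (gvert i b).
Proof.
move=> lt_a lt_b /and3P[neq_ab nadj_ab /hasP[z]]; rewrite mem_iota => /andP[_ lt_z] /andP[az zb].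
apply/and3P; split; first by apply: contra_neq neq_ab; apply: gvert_inj.
  by rewrite gvert_adj.
by apply/existsP; exists (gvert i z); rewrite !gvert_adj ?az.
Qed.

Lemma gvert_dist2_via_root i j a b : i != j -> a < gsz (gad i) -> b < gsz (gad j) ->
  gedge (gad i) a (groot (gad i)) -> gedge (gad j) (groot (gad j)) b ->
  dist2 adj (gvert i a) (gvert j b).
Proof.
move=> neq_ij lt_a lt_b a_r r_b.
have neq_a : a != groot (gad i) by apply: contraTneq a_r => ->; apply: gedge_irr.
have neq_b : b != groot (gad j) by apply: contraTneq r_b => <-; apply: gedge_irr.
apply/and3P; split; first exact: gvert_tag_neq.
  have [k -> _] := gvertP lt_a neq_a; have [l -> _] := gvertP lt_b neq_b.
  by apply/negP => /andP[/eqP/val_inj /= eq_ij _]; rewrite eq_ij eqxx in neq_ij.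
apply/existsP; exists None; apply/andP; split.
  by rewrite -(gvert_root i) gvert_adj ?groot_lt.
by rewrite -(gvert_root j) gvert_adj ?groot_lt.
Qed.

Variables (vS : bool) (ch : nat * nat -> seq nat).

Definition chosen_set : {set V} :=
  [set x : V | if x is Some u then bump (groot (gad (tag u))) (tagged u) \in ch (gad (tag u))
               else vS].

Local Notation S := chosen_set.

Lemma gvert_chosen i y : y < gsz (gad i) -> (gvert i y \in S) = gchosen (gad i) vS (ch (gad i)) y.
Proof.
rewrite /gchosen => lt_y; have [->|neq_y] := eqVneq y (groot (gad i)).
  by rewrite gvert_root inE.
by have [j -> <-] := gvertP lt_y neq_y; rewrite inE.
Qed.

Lemma gvert_gwitness i x y : x < gsz (gad i) -> y \in gwitnesses (gad i) vS (ch (gad i)) x ->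
  y < gsz (gad i) /\ gvert i y \in [set z in S | dist2 adj (gvert i x) z].
Proof.
move=> lt_x; rewrite mem_filter mem_iota => /andP[/andP[S_y d_xy] /andP[_ lt_y]].
by rewrite inE gvert_chosen // S_y gvert_dist2.
Qed.

Lemma card_gwitnesses i x : x < gsz (gad i) ->
  size (gwitnesses (gad i) vS (ch (gad i)) x) <= #|[set y in S | dist2 adj (gvert i x) y]|.
Proof.
move=> lt_x; set ws := gwitnesses _ _ _ _.
have uniq_ws : uniq (map (gvert i) ws).
  rewrite map_inj_in_uniq ?filter_uniq ?iota_uniq // => y z ws_y ws_z.
  by apply: gvert_inj; [case: (gvert_gwitness lt_x ws_y) | case: (gvert_gwitness lt_x ws_z)].
rewrite -(size_map (gvert i)); have /card_uniqP <- := uniq_ws.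
apply: subset_leq_card; apply/subsetP => _ /mapP[y ws_y ->].
by case: (gvert_gwitness lt_x ws_y).
Qed.

Definition other_touches_root (i : 'I_(size L)) : bool :=
  [exists j : 'I_(size L), (j != i) && gtouches_root (gad j) (ch (gad j))].

Definition root_covered : bool :=
  [exists i : 'I_(size L), gtouches_root (gad i) (ch (gad i))] ||
  [exists i : 'I_(size L), exists j : 'I_(size L),
     [&& i != j, groot_witness (gad i) (ch (gad i)) & groot_witness (gad j) (ch (gad j))]].
Hypothesis gadget_certs : forall i, gcert (gad i) vS (ch (gad i)) (other_touches_root i).

Lemma gadget_vertex_dominated u : Some u \notin S -> disj_dominated adj S (Some u).
Proof.
rewrite -(gvert_bump u); set i := tag u; set a := bump _ _.
have lt_a : a < gsz (gad i).
  by have := ltn_ord (tagged u); rewrite /a /i /bump; case: (groot _ <= _) => /=; lia.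
have neq_a : a != groot (gad i) by rewrite /a eq_sym neq_bump.
rewrite gvert_chosen // => nS_a.
move/allP: (gadget_certs i) => /(_ a); rewrite mem_iota lt_a (negbTE neq_a) => /(_ isT) /=.
rewrite /gdominated (negbTE nS_a) /= => /or3P[/hasP[y] | many | /and3P[ext a_r one]].
- rewrite mem_iota => /andP[_ lt_y] /andP[S_y a_y].
  apply/orP; left; apply/existsP; exists (gvert i y).
  by rewrite gvert_chosen // S_y gvert_adj.
- by apply/orP; right; apply: leq_trans many (card_gwitnesses lt_a).
apply/orP; right; case/existsP: ext => j /andP[neq_ji /hasP[b]].
rewrite mem_iota => /andP[_ lt_b] /andP[C_b r_b].
have neq_b : b != groot (gad j) by apply: contraTneq r_b => <-; apply: gedge_irr.
have [y ws_y] : exists y, y \in gwitnesses (gad i) vS (ch (gad i)) a.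
  by case: (gwitnesses _ _ _ _) one => // y ws _; exists y; rewrite mem_head.
apply/card_gt1P; exists (gvert i y), (gvert j b); split.
- by case: (gvert_gwitness lt_a ws_y).
- by rewrite inE gvert_chosen // /gchosen (negbTE neq_b) C_b gvert_dist2_via_root // eq_sym.
- by apply: gvert_tag_neq; rewrite // eq_sym.
Qed.

Lemma root_dominated : root_covered -> disj_dominated adj S None.
Proof.
have chosen_gvert (k : 'I_(size L)) z :
    z \in ch (gad k) -> z != groot (gad k) -> z < gsz (gad k) -> gvert k z \in S.
  by move=> C_z neq_z lt_z; rewrite gvert_chosen // /gchosen (negbTE neq_z).
case/orP => [/existsP[i /hasP[y]] | /existsP[i /existsP[j /and3P[neq_ij]]]].
  rewrite mem_iota => /andP[_ lt_y] /andP[C_y r_y].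
  have neq_y : y != groot (gad i) by apply: contraTneq r_y => <-; apply: gedge_irr.
  apply/orP; left; apply/existsP; exists (gvert i y).
  by rewrite chosen_gvert // -(gvert_root i) gvert_adj ?groot_lt.
have witness (k : 'I_(size L)) z : z \in iota 0 (gsz (gad k)) ->
    (z \in ch (gad k)) && gdist2 (gad k) (groot (gad k)) z ->
    [/\ z < gsz (gad k), z != groot (gad k) & gvert k z \in [set y in S | dist2 adj None y]].
  rewrite mem_iota => /andP[_ lt_z] /andP[C_z d_z]; move: (d_z) => /and3P[neq_z _ _].
  rewrite eq_sym in neq_z.
  by rewrite inE chosen_gvert // -(gvert_root k) gvert_dist2 ?groot_lt.
move=> /hasP[y iota_y /(witness _ _ iota_y) [_ _ S_y]].
move=> /hasP[b iota_b /(witness _ _ iota_b) [lt_b neq_b S_b]].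
apply/orP; right; apply/card_gt1P; exists (gvert i y), (gvert j b).
by split => //; apply: gvert_tag_neq.
Qed.

Lemma chosen_set_disj_domb : vS || root_covered -> disj_domb adj S.
Proof.
move=> covered; apply/disj_dombP => -[u|]; first exact: gadget_vertex_dominated.
rewrite inE => nvS; rewrite (negbTE nvS) in covered; exact: root_dominated.
Qed.

Lemma card_gadgets_vert : #|[set: V]| = 1 + \sum_(i < size L) (gsz (gad i)).-1.
Proof.
rewrite cardsT card_option card_tagged sumnE big_map big_enum /= add1n.
by congr _.+1; apply: eq_bigr => i _; rewrite card_ord.
Qed.

Lemma card_chosen_set : #|S| <= vS + \sum_(i < size L) size (ch (gad i)).
Proof.
pose s := nseq vS None ++ flatten [seq map (gvert i) (ch (gad i)) | i <- enum 'I_(size L)].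
have sub_S : S \subset s.
  apply/subsetP => -[u|]; rewrite inE mem_cat => S_x; last by rewrite S_x mem_head.
  apply/orP; right; apply/flatten_mapP; exists (tag u); first by rewrite mem_enum.
  by rewrite -(gvert_bump u) map_f.
apply: leq_trans (subset_leq_card sub_S) (leq_trans (card_size s) _).
rewrite size_cat size_nseq size_flatten /shape -map_comp sumnE big_map big_enum /=.
by rewrite leq_add2l; apply: leq_sum => i _; rewrite size_map.
Qed.

Lemma gamma_d2_chosen_bound : vS || root_covered ->
  3 * (vS + \sum_(i < size L) size (ch (gad i))) <= 1 + \sum_(i < size L) (gsz (gad i)).-1 ->
  3 * gamma_d2 adj <= #|[set: V]|.
Proof.
move=> covered count; rewrite card_gadgets_vert; apply: leq_trans count.
rewrite leq_mul2l /=; apply: leq_trans card_chosen_set.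
exact/gamma_d2_le/chosen_set_disj_domb.
Qed.

End Assembly.

Definition gadget_types : seq (nat * nat) :=
  [:: (3, 0); (4, 0); (5, 0); (3, 1); (3, 2); (3, 3);
      (4, 1); (4, 2); (4, 3); (5, 1); (5, 2); (5, 3)].

Lemma gadget_typesP g : in_D1 g || in_D2 g -> g \in gadget_types.
Proof.
case: g => s t; rewrite /in_D1 /in_D2 /= => gadget_st.
have: s \in [:: 3; 4; 5] by rewrite !inE; lia.
have: t \in [:: 0; 1; 2; 3] by rewrite !inE; lia.
by rewrite !inE => /or4P[]/eqP-> /or3P[]/eqP->.
Qed.

Lemma gadget_types_cycle g : g \in gadget_types -> 1 < g.1.
Proof. exact: allP (isT : all (fun g => 1 < g.1) gadget_types) g. Qed.

Definition choice_with_root (g : nat * nat) : seq nat :=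
  match g with
  | (4, 0) | (5, 0) | (4, 1) | (4, 2) | (5, 1) => [:: 2]
  | (3, 1) | (3, 2) | (3, 3) => [:: 0]
  | (4, 3) => [:: 2; 4]
  | (5, 2) => [:: 1; 4]
  | (5, 3) => [:: 2; 5]
  | _ => [::]
  end.

Definition choice_without_root (g : nat * nat) : seq nat :=
  match g with
  | (3, 0) | (4, 0) => [:: 1]
  | (5, 0) | (4, 1) => [:: 2]
  | (3, 1) | (3, 2) => [:: 0]
  | (3, 3) => [:: 0; 4]
  | (4, 2) => [:: 2; 4]
  | (4, 3) => [:: 2; 5]
  | (5, 1) => [:: 0; 2]
  | (5, 2) | (5, 3) => [:: 2; 5]
  | _ => [::]
  end.

Definition choice_in_pair (g : nat * nat) : seq nat :=
  if g == (4, 0) then [:: 2] else choice_without_root g.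

Definition spare (g : nat * nat) : nat := (gsz g).-1 - 3 * size (choice_with_root g).

Lemma choice_with_root_cert :
  all (fun g => gcert g true (choice_with_root g) false &&
                (3 * size (choice_with_root g) <= (gsz g).-1)) gadget_types.
Proof. by vm_compute. Qed.

Lemma choice_without_root_cert :
  all (fun g => (spare g <= 1) ==>
         [&& gcert g false (choice_without_root g) true,
             3 * size (choice_without_root g) <= (gsz g).-1
           & gtouches_root g (choice_without_root g) || (spare g == 1)]) gadget_types.
Proof. by vm_compute. Qed.

Definition pair_certified (g1 g2 : nat * nat) : bool :=
  let C1 := choice_in_pair g1 in let C2 := choice_in_pair g2 in
  [&& gcert g1 false C1 (gtouches_root g2 C2), gcert g2 false C2 (gtouches_root g1 C1),
      [|| gtouches_root g1 C1, gtouches_root g2 C2 | groot_witness g1 C1 && groot_witness g2 C2]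
    & 3 * (size C1 + size C2) <= 1 + (gsz g1).-1 + (gsz g2).-1].

Lemma pairs_certified :
  all (fun g1 => all (fun g2 => (spare g1 + spare g2 <= 1) ==>
         [|| perm_eq [:: g1; g2] G4_list, perm_eq [:: g1; g2] G5_list | pair_certified g1 g2])
       gadget_types) gadget_types.
Proof. by vm_compute. Qed.

Section Bounds.
Variable L : seq (nat * nat).
Hypothesis types_L : {subset L <= gadget_types}.
Local Notation gad i := (nth (0, 0) L i).
Implicit Types i j : 'I_(size L).

Lemma gad_type i : gad i \in gadget_types.
Proof. exact/types_L/mem_nth. Qed.

Lemma gad_cycle i : 1 < (gad i).1.
Proof. exact/gadget_types_cycle/gad_type. Qed.

Lemma bound_with_root : 1 < \sum_(i < size L) spare (gad i) ->
  3 * gamma_d2 (gadgets_adj L) <= #|[set: gadgets_vert L]|.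
Proof.
move=> spacious; have cert i := andP (allP choice_with_root_cert _ (gad_type i)).
apply: (gamma_d2_chosen_bound gad_cycle (vS := true) (ch := choice_with_root)) => //.
  by move=> i; apply: gcert_mono (cert i).1.
have split_gad (i : 'I_(size L)) :
    (gsz (gad i)).-1 = 3 * size (choice_with_root (gad i)) + spare (gad i).
  by rewrite subnKC // (cert i).2.
rewrite (eq_bigr _ (fun i _ => split_gad i)) big_split -big_distrr /=.
by rewrite mulnDr muln1 addnC addnCA leq_add2l add1n ltnS.
Qed.

Lemma bound_without_root : 2 < size L -> \sum_(i < size L) spare (gad i) <= 1 ->
  3 * gamma_d2 (gadgets_adj L) <= #|[set: gadgets_vert L]|.
Proof.
move=> many tight.
have cert (i : 'I_(size L)) : [/\ gcert (gad i) false (choice_without_root (gad i)) true,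
    3 * size (choice_without_root (gad i)) <= (gsz (gad i)).-1
  & gtouches_root (gad i) (choice_without_root (gad i)) || (spare (gad i) == 1)].
  apply/and3P; apply: (implyP (allP choice_without_root_cert _ (gad_type i))).
  by apply: leq_trans tight; rewrite (bigD1 i) //= leq_addr.
have other_touch (i : 'I_(size L)) : other_touches_root choice_without_root i.
  apply: contraTT tight => /existsPn untouched; rewrite -ltnNge.
  apply: (@leq_trans (\sum_(j | j != i) spare (gad j))); last first.
    by rewrite [leqRHS](bigD1 i) //= leq_addl.
  apply: (@leq_trans (\sum_(j in predC1 i) 1)); first by rewrite sum1_card cardC1 card_ord; lia.
  apply: leq_sum => j; rewrite inE => neq_ji; have [_ _] := cert j.
  by move: (untouched j); rewrite neq_ji /= => /negbTE -> /eqP ->.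
apply: (gamma_d2_chosen_bound gad_cycle (vS := false) (ch := choice_without_root)).
- by move=> i; have [c _ _] := cert i; apply: gcert_mono c.
- have /existsP[j /andP[_ touch]] := other_touch (Ordinal (ltnW (ltnW many))).
  by rewrite orFb; apply/orP; left; apply/existsP; exists j.
rewrite add0n big_distrr /=; apply: leq_trans (leq_addl 1 _); apply: leq_sum => i _.
by have [] := cert i.
Qed.

End Bounds.

Lemma bound_pair g1 g2 : g1 \in gadget_types -> g2 \in gadget_types -> pair_certified g1 g2 ->
  3 * gamma_d2 (gadgets_adj [:: g1; g2]) <= #|[set: gadgets_vert [:: g1; g2]]|.
Proof.
move=> type1 type2 /and4P[cert1 cert2 covered count].
have cycle (i : 'I_2) : 1 < (nth (0, 0) [:: g1; g2] i).1.
  by case: i => [[|[|//]] lt_i]; apply: gadget_types_cycle.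
apply: (@gamma_d2_chosen_bound [:: g1; g2] cycle false choice_in_pair).
- case=> [[|[|//]] lt_i] /=; [apply: gcert_mono cert1 | apply: gcert_mono cert2] => touch;
    apply/existsP; [exists (Ordinal (isT : 1 < 2)) | exists (Ordinal (isT : 0 < 2))] => //.
- rewrite orFb; case/or3P: covered => [touch|touch|/andP[wit1 wit2]]; apply/orP.
  + by left; apply/existsP; exists (Ordinal (isT : 0 < 2)).
  + by left; apply/existsP; exists (Ordinal (isT : 1 < 2)).
  right; apply/existsP; exists (Ordinal (isT : 0 < 2)).
  by apply/existsP; exists (Ordinal (isT : 1 < 2)); rewrite /= wit1 wit2.
by rewrite !big_ord_recr big_ord0 /=; lia.
Qed.

Theorem lemma2p4 (L : seq (nat * nat)) :
  F_list L -> ~~ perm_eq L G4_list -> ~~ perm_eq L G5_list ->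
  3 * gamma_d2 (gadgets_adj L) <= #|[set: gadgets_vert L]|.
Proof.
case/andP => /allP gadgets_L two_L notG4 notG5.
have types_L : {subset L <= gadget_types} by move=> g /gadgets_L/gadget_typesP.
have [spacious|tight] := ltnP 1 (\sum_(i < size L) spare (nth (0, 0) L i)).
  exact: bound_with_root.
have [many|] := ltnP 2 (size L); first exact: bound_without_root.
case: L gadgets_L types_L two_L notG4 notG5 tight => [|g1 [|g2 [|//]]] //=.
move=> _ types_L _ notG4 notG5 tight _.
have type1 := types_L g1 (mem_head _ _).
have type2 : g2 \in gadget_types by apply: types_L; rewrite !inE eqxx orbT.
apply: bound_pair (type1) (type2) _.
move: (allP (allP pairs_certified _ type1) _ type2); rewrite (negbTE notG4) (negbTE notG5) /=.
by move: tight; rewrite !big_ord_recr big_ord0 => tight /implyP; apply.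
Qed.
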